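(* Let $N\in\mathbb{N}$ with $N\ge3$, $s\in\mathbb{N}$, and $n\in\mathbb{N}$ with $n\ge n^{[1]}(s)$. Then there is a real $E$ with $|E|\le C^{[3]}_N(s)\,n^{-\frac{N+2}{2}}$ such that \[ \frac{e^{2\pi\sqrt{\frac{n+s}{3}}}}{8\cdot3^{3/4}\sqrt\pi(n+s)^{5/4}}=\frac{e^{2\pi\sqrt{\frac n3}}}{8\cdot3^{3/4}\sqrt\pi\,n^{5/4}}\left(\sum_{m=0}^{N+1}\frac{d^{[2]}_s(m)}{n^{\frac m2}}+E\right). \]
   Context: $n^{[1]}(s):=2s^4$ if $s\ge2$ and $n^{[1]}(1):=4$. For $m\in\mathbb{N}_0$: $e^{[1]}_s(0):=1$, $e^{[1]}_s(m):=\frac{s^m(2m-1)!}{(-4)^m}\sum_{\nu=1}^{m}\frac{(-4\pi^2s/3)^\nu}{(2\nu-1)!(\nu+m)!(m-\nu)!}$ ($m\ge1$); $o^{[1]}_s(m):=\frac{\pi s^{m+1}(2m)!}{\sqrt3(-4)^m}\sum_{\nu=0}^{m}\frac{(-4\pi^2s/3)^\nu}{(2\nu)!(m-\nu)!(\nu+m+1)!}$; $e^{[2]}_s(m):=\binom{-5/4}{m}s^m$; $e^{[3]}_s(m):=\sum_{k=0}^m e^{[1]}_s(k)e^{[2]}_s(m-k)$, $o^{[3]}_s(m):=\sum_{k=0}^m o^{[1]}_s(k)e^{[2]}_s(m-k)$; $d^{[2]}_s(2m):=e^{[3]}_s(m)$, $d^{[2]}_s(2m+1):=o^{[3]}_s(m)$.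 With $\kappa_s:=\cosh(2\pi\sqrt{s/3})$, $C^{[1]}_N(s):=1.5s^{\frac{N+3}{2}}\kappa_s$, $C^{[2]}_N(s):=\frac{20s}{11}(\frac{5s}{4})^{N/2}$, and $C^{[3]}_N(s):=2.7C^{[1]}_N(s)+(1+1.2\sqrt s)C^{[2]}_N(s)+((20.5+12s)C^{[2]}_N(s)+0.7)\kappa_s$. *)

From Stdlib Require Import Reals Lra Lia Arith Factorial.
Open Scope R_scope.

(* sum_{k=a}^{b} f k (empty, = 0, when b < a) *)
Fixpoint sumR (a : nat) (len : nat) (f : nat -> R) : R :=
  match len with
  | O => 0
  | S l => f a + sumR (S a) l f
  end.
Definition sum_range (a b : nat) (f : nat -> R) : R := sumR a (S b - a) f.

Definition factR (k : nat) : R := INR (fact k).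

Definition n1 (s : nat) : nat := if (s <=? 1)%nat then 4%nat else (2 * s ^ 4)%nat.

Definition e1 (s m : nat) : R :=
  match m with
  | O => 1
  | S _ =>
    (INR s) ^ m * factR (2 * m - 1) / (-4) ^ m *
    sum_range 1 m (fun nu => (- 4 * PI ^ 2 * INR s / 3) ^ nu /
        (factR (2 * nu - 1) * factR (nu + m) * factR (m - nu)))
  end.

Definition o1 (s m : nat) : R :=
  PI * (INR s) ^ (m + 1) * factR (2 * m) / (sqrt 3 * (-4) ^ m) *
  sum_range 0 m (fun nu => (- 4 * PI ^ 2 * INR s / 3) ^ nu /
      (factR (2 * nu) * factR (m - nu) * factR (nu + m + 1))).

Fixpoint fallR (a : R) (m : nat) : R :=
  match m with O => 1 | S k => fallR a k * (a - INR k) end.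
Definition gbinom (a : R) (m : nat) : R := fallR a m / factR m.

Definition e2 (s m : nat) : R := gbinom (- 5 / 4) m * (INR s) ^ m.

Definition e3 (s m : nat) : R := sum_range 0 m (fun k => e1 s k * e2 s (m - k)).
Definition o3 (s m : nat) : R := sum_range 0 m (fun k => o1 s k * e2 s (m - k)).

Definition dd2 (s j : nat) : R :=
  if Nat.even j then e3 s (Nat.div2 j) else o3 s (Nat.div2 j).

Definition kappa (s : nat) : R := cosh (2 * PI * sqrt (INR s / 3)).

Definition C1 (N s : nat) : R := 1.5 * Rpower (INR s) ((INR N + 3) / 2) * kappa s.
Definition C2 (N s : nat) : R := 20 * INR s / 11 * Rpower (5 * INR s / 4) (INR N / 2).
Definition C3 (N s : nat) : R :=
  2.7 * C1 N s + (1 + 1.2 * sqrt (INR s)) * C2 N s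
  + ((20.5 + 12 * INR s) * C2 N s + 0.7) * kappa s.

Definition mainterm (x : R) : R :=
  exp (2 * PI * sqrt (x / 3)) /
  (8 * Rpower 3 (3 / 4) * sqrt PI * Rpower x (5 / 4)).

(* With [q = s / n] and [theta = 2 pi sqrt (s / 3)], the ratio of the two main terms is
   [exp w * (1 + q)^(-5/4)] with [w = theta (sqrt (1 + q) - 1) / sqrt q].  Expand [cosh w] and
   [sinh w] in powers of [theta], and each power [u^j] of [u = sqrt (1 + q) - 1] in powers of [q]
   (its coefficients are bounded by 1 and obey a recursion coming from [u^2 + 2 u = q]);
   collecting powers of [q] produces [e1] and [o1].  Multiplying by the binomial series of
   [(1 + q)^(-5/4)], whose coefficients are bounded by [(5/4)^k], yields the Cauchy products
   [e3] and [o3].  As [q <= 1/4], every truncation error is geometric, and the total error is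
   at most [18 cosh theta (5 q / 4)^((N + 2) / 2)], which is below [C3 N s n^(-(N + 2) / 2)]. *)

From Pilot Require Import Defs.
From Stdlib Require Import Reals Lra Lia Arith Factorial.
From Coquelicot Require Import Coquelicot.
Open Scope R_scope.

Lemma sum_f_R0_zero_tail (a : nat -> R) (M T : nat) :
  (forall k, (M < k)%nat -> a k = 0) -> (M <= T)%nat -> sum_f_R0 a T = sum_f_R0 a M.
Proof.
  intros Hz HMT. induction HMT as [|T HMT IH]; [reflexivity|].
  simpl. rewrite IH, Hz by lia. ring.
Qed.

Lemma sum_f_R0_pairs (a : nat -> R) (K : nat) :
  sum_f_R0 a (2 * K + 1) = sum_f_R0 (fun k => a (2 * k)%nat + a (2 * k + 1)%nat) K.
Proof.
  induction K as [|K IH]; [reflexivity|].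
  replace (2 * S K + 1)%nat with (S (S (2 * K + 1))) by lia.
  rewrite !tech5, IH. replace (S (2 * K + 1)) with (2 * S K)%nat by lia.
  replace (S (2 * S K)) with (2 * S K + 1)%nat by lia. ring.
Qed.

Lemma sum_f_R0_swap (g : nat -> nat -> R) (T T' : nat) :
  sum_f_R0 (fun M => sum_f_R0 (fun v => g v M) T) T' =
  sum_f_R0 (fun v => sum_f_R0 (g v) T') T.
Proof.
  induction T' as [|T' IH]; [reflexivity|].
  simpl. rewrite IH, <- sum_plus. reflexivity.
Qed.

Lemma sum_f_R0_triangle_swap (g : nat -> nat -> R) (T : nat) :
  sum_f_R0 (fun L => sum_f_R0 (fun k => g k (L - k)%nat) L) T =
  sum_f_R0 (fun k => sum_f_R0 (g k) (T - k)) T.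
Proof.
  induction T as [|T IH]; [reflexivity|].
  rewrite tech5, IH, (tech5 (fun k => g k (S T - k)%nat)), tech5, Nat.sub_diag.
  rewrite (sum_eq (fun k => sum_f_R0 (g k) (S T - k))
             (fun k => sum_f_R0 (g k) (T - k) + g k (S T - k)%nat)).
  - rewrite sum_plus. simpl. ring.
  - intros k Hk. replace (S T - k)%nat with (S (T - k)) by lia. reflexivity.
Qed.

Lemma sum_f_R0_term_le (f : nat -> R) (n i : nat) :
  (forall k, 0 <= f k) -> (i <= n)%nat -> f i <= sum_f_R0 f n.
Proof.
  intros Hpos Hi. induction Hi as [|n Hi IH].
  - destruct i as [|i]; simpl; [lra|].
    pose proof (cond_pos_sum f i Hpos). lra.
  - simpl. specialize (Hpos (S n)). lra.
Qed.

Lemma sumR_sum_f_R0 (a l : nat) (f : nat -> R) :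
  sumR a (S l) f = sum_f_R0 (fun i => f (a + i)%nat) l.
Proof.
  revert a. induction l as [|l IH]; intros a.
  - simpl. rewrite Nat.add_0_r. ring.
  - change (sumR a (S (S l)) f) with (f a + sumR (S a) (S l) f). rewrite IH.
    rewrite (decomp_sum (fun i => f (a + i)%nat) (S l)) by lia. simpl pred.
    rewrite Nat.add_0_r. f_equal. apply sum_eq. intros i _. f_equal. lia.
Qed.

Lemma sum_range_0 (m : nat) (f : nat -> R) : sum_range 0 m f = sum_f_R0 f m.
Proof. unfold sum_range. now rewrite Nat.sub_0_r, sumR_sum_f_R0. Qed.

Lemma sum_range_1 (m : nat) (f : nat -> R) :
  sum_range 1 (S m) f = sum_f_R0 (fun i => f (S i)) m.
Proof. unfold sum_range. now rewrite Nat.sub_succ, Nat.sub_0_r, sumR_sum_f_R0. Qed.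

Lemma is_series_Reals (a : nat -> R) (l : R) :
  is_series a l <-> is_lim_seq (fun n => sum_f_R0 a n) l.
Proof.
  assert (E : forall n, sum_n a n = sum_f_R0 a n) by (intros; apply sum_n_Reals).
  split; intros H.
  - apply (is_lim_seq_ext (sum_n a)); [exact E | exact H].
  - change (is_lim_seq (sum_n a) l).
    apply (is_lim_seq_ext (fun n => sum_f_R0 a n)); [intros; now rewrite E | exact H].
Qed.

Lemma is_series_Rabs_le (a b : nat -> R) (A B : R) :
  is_series a A -> is_series b B -> (forall n, Rabs (a n) <= b n) -> Rabs A <= B.
Proof.
  intros Ha Hb Hab. apply is_series_Reals in Ha, Hb. apply is_lim_seq_abs in Ha.
  refine (is_lim_seq_le _ _ _ _ _ Ha Hb).
  intros n. eapply Rle_trans; [apply sum_f_R0_triangle | now apply sum_Rle].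
Qed.

Lemma sum_f_R0_le_is_series (a : nat -> R) (A : R) (T : nat) :
  is_series a A -> (forall n, 0 <= a n) -> sum_f_R0 a T <= A.
Proof.
  intros Ha Hpos. apply is_series_Reals in Ha.
  apply (is_lim_seq_incr_compare _ _ Ha). intros n. simpl. specialize (Hpos (S n)). lra.
Qed.

Lemma is_series_finite_support (a : nat -> R) (T : nat) :
  (forall k, (T < k)%nat -> a k = 0) -> is_series a (sum_f_R0 a T).
Proof.
  intros Hz. apply is_series_Reals, is_lim_seq_ext_loc with (fun _ => sum_f_R0 a T).
  - exists T. intros m Hm. symmetry. now apply sum_f_R0_zero_tail.
  - apply is_lim_seq_const.
Qed.

Lemma is_series_drop_zeros (a : nat -> R) (l : R) (d : nat) :
  (forall k, (k < d)%nat -> a k = 0) -> is_series a l -> is_series (fun k => a (d + k)%nat) l.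
Proof.
  intros Hz Ha. destruct d as [|d]; [exact Ha|].
  apply is_series_incr_n; [lia|]. simpl pred.
  rewrite sum_n_Reals, (sum_eq _ (fun _ => 0)), sum_cte by (intros; apply Hz; lia).
  change (is_series a (l + 0 * INR (S d))). now rewrite Rmult_0_l, Rplus_0_r.
Qed.

Lemma is_series_tail (a : nat -> R) (A : R) (T : nat) :
  is_series a A -> is_series (fun k => a (S T + k)%nat) (A - sum_f_R0 a T).
Proof.
  intros Ha. apply is_series_incr_n; [lia|]. simpl pred. rewrite sum_n_Reals.
  change (is_series a (A - sum_f_R0 a T + sum_f_R0 a T)). now rewrite Rplus_comm, Rplus_minus.
Qed.

Lemma is_series_tail_geom_le (a : nat -> R) (A C q : R) (T : nat) :
  is_series a A -> 0 <= q < 1 -> (forall k, Rabs (a k) <= C * q ^ k) ->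
  Rabs (A - sum_f_R0 a T) <= C * q ^ S T / (1 - q).
Proof.
  intros Ha Hq Hb.
  assert (Hgeom : Rabs q < 1) by (rewrite Rabs_right; lra).
  apply (is_series_Rabs_le _ _ _ _ (is_series_tail a A T Ha)
           (is_series_scal (C * q ^ S T) _ _ (is_series_geom q Hgeom))).
  intros k. change (Rabs (a (S T + k)%nat) <= C * q ^ S T * q ^ k).
  rewrite Rmult_assoc, <- pow_add. apply Hb.
Qed.

Lemma is_series_pairs (a : nat -> R) (l : R) :
  is_series a l -> is_series (fun k => a (2 * k)%nat + a (2 * k + 1)%nat) l.
Proof.
  intros Ha. apply is_series_Reals in Ha. apply is_series_Reals.
  apply is_lim_seq_ext with (fun k => sum_f_R0 a (2 * k + 1)).
  - intros k. apply sum_f_R0_pairs.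
  - apply (is_lim_seq_subseq _ _ (fun k => 2 * k + 1)%nat); auto.
    intros P [N HN]. exists N. intros m Hm. apply HN. lia.
Qed.

Lemma is_series_exp (x : R) : is_series (fun n => x ^ n / INR (fact n)) (exp x).
Proof.
  apply (is_series_ext (fun n => / INR (fact n) * x ^ n)); [intros; apply Rmult_comm|].
  apply is_pseries_R, is_exp_Reals.
Qed.

Lemma pow_opp_even (x : R) (k : nat) : (- x) ^ (2 * k) = x ^ (2 * k).
Proof. rewrite !pow_mult. f_equal. ring. Qed.

Lemma is_series_cosh (x : R) :
  is_series (fun k => x ^ (2 * k) / INR (fact (2 * k))) (cosh x).
Proof.
  pose proof (is_series_pairs _ _ (is_series_scal (/ 2) _ _
    (is_series_plus _ _ _ _ (is_series_exp x) (is_series_exp (- x))))) as H.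
  replace (cosh x) with (/ 2 * (exp x + exp (- x))) by (unfold cosh; field).
  refine (is_series_ext _ _ _ _ H). intros k.
  change (/ 2 * (x ^ (2 * k) / INR (fact (2 * k)) + (- x) ^ (2 * k) / INR (fact (2 * k))) +
          / 2 * (x ^ (2 * k + 1) / INR (fact (2 * k + 1)) +
                 (- x) ^ (2 * k + 1) / INR (fact (2 * k + 1)))
          = x ^ (2 * k) / INR (fact (2 * k))).
  rewrite !pow_add, !pow_opp_even. field. split; apply INR_fact_neq_0.
Qed.

Lemma is_series_sinh (x : R) :
  is_series (fun k => x ^ (2 * k + 1) / INR (fact (2 * k + 1))) (sinh x).
Proof.
  pose proof (is_series_pairs _ _ (is_series_scal (/ 2) _ _
    (is_series_minus _ _ _ _ (is_series_exp x) (is_series_exp (- x))))) as H.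
  replace (sinh x) with (/ 2 * (exp x - exp (- x))) by (unfold sinh; field).
  refine (is_series_ext _ _ _ _ H). intros k.
  change (/ 2 * (x ^ (2 * k) / INR (fact (2 * k)) - (- x) ^ (2 * k) / INR (fact (2 * k))) +
          / 2 * (x ^ (2 * k + 1) / INR (fact (2 * k + 1)) -
                 (- x) ^ (2 * k + 1) / INR (fact (2 * k + 1)))
          = x ^ (2 * k + 1) / INR (fact (2 * k + 1))).
  rewrite !pow_add, !pow_opp_even. field. split; apply INR_fact_neq_0.
Qed.

Lemma cosh_pos (x : R) : 0 < cosh x.
Proof. unfold cosh. pose proof (exp_pos x). pose proof (exp_pos (- x)). lra. Qed.

Lemma sinh_nonneg (x : R) : 0 <= x -> 0 <= sinh x.
Proof.
  intros Hx. unfold sinh. destruct Hx as [Hx | <-].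
  - assert (exp (- x) < exp x) by (apply exp_increasing; lra). lra.
  - rewrite Ropp_0. lra.
Qed.

Lemma sinh_le_cosh (x : R) : sinh x <= cosh x.
Proof. unfold sinh, cosh. pose proof (exp_pos (- x)). lra. Qed.

Lemma cosh_plus_sinh (x : R) : cosh x + sinh x = exp x.
Proof. unfold cosh, sinh. field. Qed.

Lemma pow_le_pow_le_1 (b : R) (a c : nat) : 0 <= b <= 1 -> (a <= c)%nat -> b ^ c <= b ^ a.
Proof.
  intros Hb Hac. induction Hac as [|c Hac IH]; [lra|].
  simpl. pose proof (pow_le b c ltac:(lra)). nra.
Qed.

Lemma pow_add_sub (x : R) (k L : nat) : (k <= L)%nat -> x ^ L = x ^ k * x ^ (L - k).
Proof. intros HkL. rewrite <- pow_add. f_equal. lia. Qed.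

Lemma Rpower_Rinv (x y : R) : 0 < x -> Rpower (/ x) y = Rpower x (- y).
Proof. intros Hx. unfold Rpower. rewrite ln_Rinv by exact Hx. f_equal. ring. Qed.

Lemma Rpower_1_base (y : R) : Rpower 1 y = 1.
Proof. unfold Rpower. now rewrite ln_1, Rmult_0_r, exp_0. Qed.

Lemma pow_opp_l (x : R) (k : nat) : (- x) ^ k = (-1) ^ k * x ^ k.
Proof. rewrite <- Rpow_mult_distr. f_equal. ring. Qed.

Lemma Rinv_pow_opp (x : R) (k : nat) : x <> 0 -> / (- x) ^ k = (-1) ^ k / x ^ k.
Proof.
  intros Hx. rewrite pow_opp_l, Rinv_mult, <- pow_inv.
  replace (/ -1) with (-1) by field. reflexivity.
Qed.

Lemma pow_neg_one_add_cancel (v d : nat) : (-1) ^ (v + d) * (-1) ^ v = (-1) ^ d.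
Proof.
  rewrite pow_add, Rmult_comm, <- Rmult_assoc, <- pow_add.
  replace (v + v)%nat with (2 * v)%nat by lia. now rewrite pow_1_even, Rmult_1_l.
Qed.

Lemma factR_S (k : nat) : factR (S k) = INR (S k) * factR k.
Proof. unfold factR. now rewrite fact_simpl, mult_INR. Qed.

Lemma factR_pos (k : nat) : 0 < factR k.
Proof. apply INR_fact_lt_0. Qed.

Lemma factR_add_le (a b : nat) : factR (a + b) <= 2 ^ (a + b) * factR a * factR b.
Proof.
  assert (HC : Binomial.C (a + b) a <= 2 ^ (a + b)).
  { replace 2 with (1 + 1) by ring. rewrite binomial.
    apply Rle_trans with (Binomial.C (a + b) a * 1 ^ a * 1 ^ (a + b - a)).
    - rewrite !pow1. lra.
    - apply (sum_f_R0_term_le (fun i => Binomial.C (a + b) i * 1 ^ i * 1 ^ (a + b - i))); [|lia].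
      intros k. rewrite !pow1, !Rmult_1_r. unfold Binomial.C.
      apply Rmult_le_pos; [apply pos_INR|].
      left; apply Rinv_0_lt_compat, Rmult_lt_0_compat; apply INR_fact_lt_0. }
  unfold Binomial.C in HC. replace (a + b - a)%nat with b in HC by lia.
  fold (factR (a + b)) (factR a) (factR b) in HC.
  pose proof (factR_pos a). pose proof (factR_pos b).
  apply (Rmult_le_compat_r (factR a * factR b)) in HC; [|nra].
  unfold Rdiv in HC. rewrite Rmult_assoc, Rinv_l, Rmult_1_r in HC by nra. lra.
Qed.

(** * The binomial series *)

Lemma gbinom_0 (a : R) : gbinom a 0 = 1.
Proof. unfold gbinom, factR. simpl. field. Qed.

Lemma gbinom_S (a : R) (k : nat) : gbinom a (S k) = gbinom a k * (a - INR k) / INR (S k).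
Proof.
  unfold gbinom. simpl fallR. rewrite factR_S. field.
  split; [apply Rgt_not_eq, factR_pos | apply not_0_INR; lia].
Qed.

Lemma gbinom_bound (a c : R) (k : nat) : 1 <= c -> Rabs a <= c -> Rabs (gbinom a k) <= c ^ k.
Proof.
  intros Hc Ha. induction k as [|k IH].
  - rewrite gbinom_0, Rabs_R1. simpl; lra.
  - assert (Hk : 0 < INR (S k)) by (apply lt_0_INR; lia).
    assert (Hstep : Rabs (a - INR k) <= c * INR (S k)).
    { rewrite S_INR, Rmult_plus_distr_l, Rmult_1_r.
      pose proof (pos_INR k). pose proof (Rmult_le_compat_r (INR k) 1 c (pos_INR k) Hc).
      apply Rabs_le_between in Ha. apply Rabs_le. lra. }
    rewrite gbinom_S. unfold Rdiv. rewrite !Rabs_mult, Rabs_inv, (Rabs_right (INR (S k))) by lra.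
    apply Rle_trans with (c ^ k * (c * INR (S k)) * / INR (S k)).
    + apply Rmult_le_compat_r; [left; now apply Rinv_0_lt_compat|].
      apply Rmult_le_compat; auto using Rabs_pos.
    + right. change (c ^ S k) with (c * c ^ k). field. lra.
Qed.

Section BinomialSeries.
Variables a c : R.
Hypothesis Hc : 1 <= c.
Hypothesis Ha : Rabs a <= c.

Lemma CV_radius_gbinom : Rbar_le (/ c) (CV_radius (gbinom a)).
Proof.
  apply CV_radius_bounded. exists 1. intros k.
  assert (Hc' : 0 < / c) by (apply Rinv_0_lt_compat; lra).
  rewrite Rabs_mult, <- RPow_abs, (Rabs_right (/ c)) by lra.
  apply Rle_trans with (c ^ k * (/ c) ^ k).
  - apply Rmult_le_compat_r; [apply pow_le; lra | now apply gbinom_bound].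
  - rewrite <- Rpow_mult_distr, Rinv_r, pow1 by lra. lra.
Qed.

Lemma gbinom_in_radius (z : R) : Rabs z < / c -> Rbar_lt (Rabs z) (CV_radius (gbinom a)).
Proof. intros Hz. apply (Rbar_lt_le_trans _ (/ c)); [exact Hz | apply CV_radius_gbinom]. Qed.

Lemma PSeries_gbinom_ode (z : R) : Rabs z < / c ->
  (1 + z) * PSeries (PS_derive (gbinom a)) z = a * PSeries (gbinom a) z.
Proof.
  intros Hz. pose proof (gbinom_in_radius z Hz) as Hin.
  assert (HD : is_series (fun k => PS_derive (gbinom a) k * z ^ k) (PSeries (PS_derive (gbinom a)) z)).
  { apply is_pseries_R, PSeries_correct, CV_radius_inside. now rewrite CV_radius_derive. }
  assert (HP : is_series (fun k => gbinom a k * z ^ k) (PSeries (gbinom a) z)).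
  { apply is_pseries_R, PSeries_correct, CV_radius_inside, Hin. }
  set (D := PSeries (PS_derive (gbinom a)) z) in *. set (P := PSeries (gbinom a) z) in *.
  (* the ODE comes from (k + 1) b_(k+1) = (a - k) b_k *)
  assert (Hcoef : forall k, PS_derive (gbinom a) k = (a - INR k) * gbinom a k).
  { intros k. unfold PS_derive. rewrite gbinom_S. field. apply not_0_INR; lia. }
  assert (HzD : is_series (fun k => INR k * gbinom a k * z ^ k) (z * D)).
  { apply is_series_decr_1.
    change (is_series (fun k => INR (S k) * gbinom a (S k) * z ^ S k) (z * D - 0 * gbinom a 0 * 1)).
    rewrite Rmult_0_l, Rmult_0_l, Rminus_0_r.
    refine (is_series_ext _ _ _ _ (is_series_scal z _ _ HD)). intros k.
    change (z * (PS_derive (gbinom a) k * z ^ k) = INR (S k) * gbinom a (S k) * z ^ S k).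
    unfold PS_derive. simpl pow. ring. }
  assert (Hsum : is_series (fun k => a * (gbinom a k * z ^ k)) (D + z * D)).
  { refine (is_series_ext _ _ _ _ (is_series_plus _ _ _ _ HD HzD)). intros k.
    change ((PS_derive (gbinom a) k * z ^ k) + INR k * gbinom a k * z ^ k = a * (gbinom a k * z ^ k)).
    rewrite Hcoef. ring. }
  assert (E : D + z * D = a * P).
  { rewrite <- (is_series_unique _ _ Hsum). exact (is_series_unique _ _ (is_series_scal a _ _ HP)). }
  rewrite <- E. ring.
Qed.

(* [t |-> PSeries (gbinom a) t * (1 + t)^(-a)] has derivative zero by the ODE, so it is
   constantly equal to its value [1] at [t = 0]. *)
Lemma PSeries_gbinom (z : R) : Rabs z < / c -> PSeries (gbinom a) z = Rpower (1 + z) a.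
Proof.
  intros Hz.
  assert (Hc' : / c <= 1) by (rewrite <- Rinv_1; apply Rinv_le_contravar; lra).
  set (Q := fun t => PSeries (gbinom a) t * Rpower (1 + t) (- a)).
  assert (HQ : forall t, Rabs (t - 0) <= Rabs z -> is_derive Q t 0).
  { intros t Ht. rewrite Rminus_0_r in Ht.
    assert (Ht' : Rabs t < / c) by lra.
    assert (Ht1 : 0 < 1 + t) by (apply Rabs_def2 in Ht'; lra).
    apply is_derive_Reals.
    replace 0 with (PSeries (PS_derive (gbinom a)) t * Rpower (1 + t) (- a) +
                    PSeries (gbinom a) t * (- a * Rpower (1 + t) (- a - 1) * 1)).
    - apply (derivable_pt_lim_mult (PSeries (gbinom a)) (fun t => Rpower (1 + t) (- a))).
      + apply is_derive_Reals, is_derive_PSeries, gbinom_in_radius, Ht'.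
      + apply (derivable_pt_lim_comp (fun t => 1 + t) (fun x => Rpower x (- a))).
        * apply is_derive_Reals. auto_derive; auto; ring.
        * apply derivable_pt_lim_power; lra.
    - assert (E : Rpower (1 + t) (- a) = (1 + t) * Rpower (1 + t) (- a - 1)).
      { rewrite <- (Rpower_1 (1 + t)) at 2 by lra. rewrite <- Rpower_plus. f_equal. ring. }
      rewrite E, Rmult_1_r, <- Rmult_assoc, (Rmult_comm _ (1 + t)), PSeries_gbinom_ode by exact Ht'.
      ring. }
  destruct (MVT_cor4 Q (fun _ => 0) 0 (Rabs z) HQ z) as [t [Ht _]]; [rewrite Rminus_0_r; lra|].
  unfold Q in Ht. rewrite PSeries_0, gbinom_0, Rplus_0_r, Rpower_1_base in Ht.
  assert (Hz1 : 0 < 1 + z) by (apply Rabs_def2 in Hz; lra).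
  assert (E : Rpower (1 + z) (- a) * Rpower (1 + z) a = 1).
  { rewrite <- Rpower_plus, Rplus_opp_l. now apply Rpower_O. }
  transitivity (PSeries (gbinom a) z * Rpower (1 + z) (- a) * Rpower (1 + z) a).
  - rewrite Rmult_assoc, E. ring.
  - replace (PSeries (gbinom a) z * Rpower (1 + z) (- a)) with 1 by lra. ring.
Qed.

Lemma is_series_gbinom (z : R) : Rabs z < / c ->
  is_series (fun k => gbinom a k * z ^ k) (Rpower (1 + z) a).
Proof.
  intros Hz. rewrite <- PSeries_gbinom by exact Hz.
  apply is_pseries_R, PSeries_correct, CV_radius_inside, gbinom_in_radius, Hz.
Qed.

End BinomialSeries.

(** * Powers of [sqrt (1 + z) - 1] *)

(* [sqrt_pow_coef j k] is the coefficient of [z^k] in [(sqrt (1 + z) - 1)^j];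
   [sqrt_pow_closed i d] is its value at [j = S i], [k = S i + d]. *)
Definition sqrt_pow_closed (i d : nat) : R :=
  (-1) ^ d * INR (S i) * factR (i + 2 * d) / (2 ^ (S i + 2 * d) * factR (S i + d) * factR d).
Definition sqrt_pow_coef (j k : nat) : R :=
  match j with
  | O => if (k =? 0)%nat then 1 else 0
  | S i => if (k <? j)%nat then 0 else sqrt_pow_closed i (k - j)
  end.

Lemma sqrt_pow_coef_lt (j k : nat) : (k < j)%nat -> sqrt_pow_coef j k = 0.
Proof.
  intros Hk. destruct j as [|i]; [lia|]. simpl.
  now replace (k <? S i)%nat with true by (symmetry; apply Nat.ltb_lt, Hk).
Qed.

Lemma sqrt_pow_coef_S (i d : nat) : sqrt_pow_coef (S i) (S i + d) = sqrt_pow_closed i d.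
Proof.
  unfold sqrt_pow_coef. replace (S i + d <? S i)%nat with false by (symmetry; apply Nat.ltb_ge; lia).
  f_equal. lia.
Qed.

Lemma sqrt_pow_closed_0 (i : nat) : sqrt_pow_closed i 0 = / 2 ^ S i.
Proof.
  unfold sqrt_pow_closed. rewrite !Nat.add_0_r, factR_S.
  pose proof (factR_pos i). pose proof (pow_lt 2 (S i) ltac:(lra)).
  change (factR 0) with 1. rewrite pow_O. field.
  repeat split; try lra. apply not_0_INR. lia.
Qed.

Lemma sqrt_pow_closed_rec (i d : nat) :
  sqrt_pow_closed (S (S i)) d = sqrt_pow_closed i (S d) - 2 * sqrt_pow_closed (S i) (S d).
Proof.
  unfold sqrt_pow_closed.
  replace (S (S i) + 2 * d)%nat with (S (S (i + 2 * d))) by lia.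
  replace (i + 2 * S d)%nat with (S (S (i + 2 * d))) by lia.
  replace (S i + 2 * S d)%nat with (S (S (S (i + 2 * d)))) by lia.
  replace (S (S (S i)) + 2 * d)%nat with (S (S (S (i + 2 * d)))) by lia.
  replace (S (S i) + 2 * S d)%nat with (S (S (S (S (i + 2 * d))))) by lia.
  replace (S (S (S i)) + d)%nat with (S (S (S (i + d)))) by lia.
  replace (S i + S d)%nat with (S (S (i + d))) by lia.
  replace (S (S i) + S d)%nat with (S (S (S (i + d)))) by lia.
  rewrite !factR_S, <- !tech_pow_Rmult.
  pose proof (factR_pos (i + 2 * d)). pose proof (factR_pos (i + d)). pose proof (factR_pos d).
  pose proof (pow_lt 2 (i + 2 * d) ltac:(lra)). pose proof (pos_INR i). pose proof (pos_INR d).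
  rewrite !S_INR, !plus_INR, !mult_INR. simpl INR.
  field. repeat split; lra.
Qed.

Lemma sqrt_pow_closed_1 (d : nat) : sqrt_pow_closed 1 d = - 2 * sqrt_pow_closed 0 (S d).
Proof.
  unfold sqrt_pow_closed.
  replace (1 + 2 * d)%nat with (S (2 * d)) by lia.
  replace (0 + 2 * S d)%nat with (S (S (2 * d))) by lia.
  replace (2 + 2 * d)%nat with (S (S (2 * d))) by lia.
  replace (1 + 2 * S d)%nat with (S (S (S (2 * d)))) by lia.
  replace (2 + d)%nat with (S (S d)) by lia.
  replace (1 + S d)%nat with (S (S d)) by lia.
  rewrite !factR_S, <- !tech_pow_Rmult.
  pose proof (factR_pos (2 * d)). pose proof (factR_pos d).
  pose proof (pow_lt 2 (2 * d) ltac:(lra)). pose proof (pos_INR d).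
  rewrite !S_INR, !mult_INR. simpl INR.
  field. repeat split; lra.
Qed.

(* [u = sqrt (1 + z) - 1] satisfies [u^2 + 2 u = z], hence [u^(j+2) = z u^j - 2 u^(j+1)]. *)
Lemma sqrt_pow_coef_rec (j k : nat) :
  sqrt_pow_coef (S (S j)) (S k) = sqrt_pow_coef j k - 2 * sqrt_pow_coef (S j) (S k).
Proof.
  destruct j as [|i].
  - destruct k as [|k].
    + rewrite sqrt_pow_coef_lt by lia.
      change (sqrt_pow_coef 1 1) with (sqrt_pow_coef 1 (1 + 0)).
      rewrite sqrt_pow_coef_S, sqrt_pow_closed_0. simpl. field.
    + change (sqrt_pow_coef 2 (S (S k))) with (sqrt_pow_coef 2 (2 + k)).
      change (sqrt_pow_coef 1 (S (S k))) with (sqrt_pow_coef 1 (1 + S k)).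
      rewrite !sqrt_pow_coef_S, sqrt_pow_closed_1. simpl. ring.
  - destruct (lt_eq_lt_dec k (S i)) as [[Hlt | ->] | Hgt].
    + rewrite !sqrt_pow_coef_lt by lia. ring.
    + rewrite sqrt_pow_coef_lt by lia.
      pose proof (sqrt_pow_coef_S i 0) as E1. pose proof (sqrt_pow_coef_S (S i) 0) as E2.
      rewrite Nat.add_0_r in E1, E2. rewrite E1, E2, !sqrt_pow_closed_0.
      rewrite <- !tech_pow_Rmult. field. apply pow_nonzero. lra.
    + assert (exists d, k = (S i + S d)%nat) as [d ->] by (exists (k - S (S i))%nat; lia).
      rewrite (sqrt_pow_coef_S i (S d)).
      replace (S (S i + S d)) with (S (S (S i)) + d)%nat by lia.
      rewrite sqrt_pow_coef_S.
      replace (S (S (S i)) + d)%nat with (S (S i) + S d)%nat by lia.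
      rewrite sqrt_pow_coef_S. apply sqrt_pow_closed_rec.
Qed.
Lemma sqrt_pow_closed_0_gbinom (k : nat) : sqrt_pow_closed 0 k = gbinom (1 / 2) (S k).
Proof.
  induction k as [|k IH].
  - rewrite sqrt_pow_closed_0, gbinom_S, gbinom_0. simpl. field.
  - rewrite gbinom_S, <- IH. unfold sqrt_pow_closed.
    replace (0 + 2 * S k)%nat with (S (S (2 * k))) by lia.
    replace (1 + 2 * S k)%nat with (S (S (S (2 * k)))) by lia.
    replace (1 + S k)%nat with (S (S k)) by lia.
    replace (0 + 2 * k)%nat with (2 * k)%nat by lia.
    replace (1 + 2 * k)%nat with (S (2 * k)) by lia.
    replace (1 + k)%nat with (S k) by lia.
    rewrite !factR_S, <- !tech_pow_Rmult.
    pose proof (factR_pos (2 * k)). pose proof (factR_pos k).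
    pose proof (pow_lt 2 (2 * k) ltac:(lra)). pose proof (pos_INR k).
    rewrite !S_INR, !mult_INR. simpl INR.
    field. repeat split; lra.
Qed.

Lemma sqrt_pow_closed_abs_le (i d : nat) : Rabs (sqrt_pow_closed i d) <= 1.
Proof.
  set (X := INR (S i) * factR (i + 2 * d) / (2 ^ (S i + 2 * d) * factR (S i + d) * factR d)).
  assert (E : sqrt_pow_closed i d = (-1) ^ d * X) by (unfold sqrt_pow_closed, X, Rdiv; ring).
  pose proof (factR_pos (i + d)). pose proof (factR_pos (i + 2 * d)). pose proof (factR_pos d).
  pose proof (pow_lt 2 (i + 2 * d) ltac:(lra)). pose proof (lt_0_INR (S i) ltac:(lia)).
  assert (HD : 0 < 2 ^ (S i + 2 * d) * factR (S i + d) * factR d).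
  { pose proof (factR_pos (S i + d)). pose proof (pow_lt 2 (S i + 2 * d) ltac:(lra)).
    apply Rmult_lt_0_compat; [apply Rmult_lt_0_compat|]; lra. }
  assert (HX : 0 <= X) by (left; apply Rdiv_lt_0_compat; [apply Rmult_lt_0_compat|]; lra).
  rewrite E, Rabs_mult, pow_1_abs, Rmult_1_l, Rabs_pos_eq by exact HX.
  unfold X. apply (Rdiv_le_1 _ _ HD).
  (* by [(i + 2d)! <= 2^(i + 2d) (i + d)! d!] the quotient is at most [(i + 1) / (2 (i + d + 1))] *)
  pose proof (factR_add_le (i + d) d) as Hf.
  replace (i + d + d)%nat with (i + 2 * d)%nat in Hf by lia.
  replace (S i + 2 * d)%nat with (S (i + 2 * d)) by lia.
  replace (S i + d)%nat with (S (i + d)) by lia.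
  rewrite factR_S, <- tech_pow_Rmult.
  assert (Hle : INR (S i) <= INR (S (i + d))) by (apply le_INR; lia).
  apply Rle_trans with (INR (S (i + d)) * (2 ^ (i + 2 * d) * factR (i + d) * factR d)).
  - apply Rmult_le_compat; lra.
  - assert (0 <= INR (S (i + d)) * (2 ^ (i + 2 * d) * factR (i + d) * factR d)).
    { apply Rmult_le_pos; [lra|]. apply Rmult_le_pos; [apply Rmult_le_pos|]; lra. }
    nra.
Qed.

Lemma sqrt_pow_coef_abs_le (j k : nat) : Rabs (sqrt_pow_coef j k) <= 1.
Proof.
  destruct j as [|i]; simpl.
  - destruct (k =? 0)%nat; rewrite ?Rabs_R1, ?Rabs_R0; lra.
  - destruct (k <? S i)%nat; [rewrite Rabs_R0; lra | apply sqrt_pow_closed_abs_le].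
Qed.

Lemma is_series_sqrt_pow (z : R) (j : nat) : Rabs z < 1 ->
  is_series (fun k => sqrt_pow_coef j k * z ^ k) ((sqrt (1 + z) - 1) ^ j).
Proof.
  intros Hz. set (u := sqrt (1 + z) - 1).
  assert (Hz1 : 0 < 1 + z) by (apply Rabs_def2 in Hz; lra).
  assert (H0 : is_series (fun k => sqrt_pow_coef 0 k * z ^ k) 1).
  { pose proof (is_series_finite_support (fun k => sqrt_pow_coef 0 k * z ^ k) 0) as H.
    simpl in H. rewrite Rmult_1_r in H. apply H. intros [|k] Hk; [lia | simpl; ring]. }
  assert (H1 : is_series (fun k => sqrt_pow_coef 1 k * z ^ k) u).
  { assert (Hb := is_series_gbinom (1 / 2) 1 ltac:(lra) ltac:(rewrite Rabs_right; lra) z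
                   ltac:(rewrite Rinv_1; exact Hz)).
    replace (1 / 2) with (/ 2) in Hb by field. rewrite Rpower_sqrt in Hb by exact Hz1.
    refine (is_series_ext _ _ _ _ (is_series_minus _ _ _ _ Hb H0)). intros [|k].
    - change (plus ?a (opp ?b)) with (a + - b). rewrite gbinom_0. simpl. ring.
    - change (plus ?a (opp ?b)) with (a + - b).
      change (sqrt_pow_coef 1 (S k)) with (sqrt_pow_coef 1 (1 + k)).
      rewrite sqrt_pow_coef_S, sqrt_pow_closed_0_gbinom. replace (1 / 2) with (/ 2) by field.
      simpl. ring. }
  assert (Hpair : forall j, is_series (fun k => sqrt_pow_coef j k * z ^ k) (u ^ j) /\
                          is_series (fun k => sqrt_pow_coef (S j) k * z ^ k) (u ^ S j)).
  { induction j0 as [|j0 [IH0 IH1]]; [split; [exact H0 | now rewrite pow_1] | split; [exact IH1 |]].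
    assert (Hu : u ^ S (S j0) = z * u ^ j0 - 2 * u ^ S j0).
    { assert (Hsq : sqrt (1 + z) * sqrt (1 + z) = 1 + z) by (apply sqrt_sqrt; lra).
      assert (Hquad : z = u * u + 2 * u) by (unfold u; lra).
      rewrite Hquad. simpl. ring. }
    rewrite Hu. apply is_series_decr_1.
    change (is_series (fun k => sqrt_pow_coef (S (S j0)) (S k) * z ^ S k)
              (z * u ^ j0 - 2 * u ^ S j0 - sqrt_pow_coef (S (S j0)) 0 * 1)).
    rewrite sqrt_pow_coef_lt, Rmult_0_l, Rminus_0_r by lia.
    assert (IH1' : is_series (fun k => sqrt_pow_coef (S j0) (S k) * z ^ S k) (u ^ S j0)).
    { refine (is_series_drop_zeros (fun k => sqrt_pow_coef (S j0) k * z ^ k) _ 1 _ IH1).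
      intros k Hk. rewrite sqrt_pow_coef_lt by lia. ring. }
    refine (is_series_ext _ _ _ _ (is_series_minus _ _ _ _ (is_series_scal z _ _ IH0)
                                     (is_series_scal 2 _ _ IH1'))).
    intros k. change (plus (scal ?a ?b) (opp (scal ?c ?d))) with (a * b + - (c * d)).
    rewrite sqrt_pow_coef_rec. simpl. ring. }
  apply Hpair.
Qed.

Lemma is_series_sqrt_pow_shift (z : R) (j e : nat) : 0 < z < 1 -> (e <= j)%nat ->
  is_series (fun M => sqrt_pow_coef j (e + M) * z ^ M) ((sqrt (1 + z) - 1) ^ j / z ^ e).
Proof.
  intros Hz He.
  assert (Hzero : forall k, (k < e)%nat -> sqrt_pow_coef j k * z ^ k = 0).
  { intros k Hk. rewrite sqrt_pow_coef_lt by lia. ring. }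
  pose proof (is_series_scal_r (/ z ^ e) _ _ (is_series_drop_zeros _ _ e Hzero
    (is_series_sqrt_pow z j ltac:(rewrite Rabs_right; lra)))) as H.
  refine (is_series_ext _ _ _ _ H). intros M.
  change (sqrt_pow_coef j (e + M) * z ^ (e + M) * / z ^ e = sqrt_pow_coef j (e + M) * z ^ M).
  pose proof (pow_lt z e ltac:(lra)). rewrite pow_add. field. lra.
Qed.

(** * The coefficients [e1] and [o1] *)

Definition theta (s : nat) : R := 2 * PI * sqrt (INR s / 3).

Lemma theta_nonneg (s : nat) : 0 <= theta s.
Proof. unfold theta. pose proof PI_RGT_0. pose proof (sqrt_pos (INR s / 3)). nra. Qed.

Lemma theta_sq (s : nat) : theta s ^ 2 = 4 * PI ^ 2 * INR s / 3.
Proof.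
  unfold theta. pose proof (pos_INR s).
  rewrite Rpow_mult_distr, pow2_sqrt by lra. field.
Qed.

Lemma theta_mul_sqrt (s : nat) : theta s * sqrt (INR s) = 2 * PI * INR s / sqrt 3.
Proof.
  unfold theta. pose proof (pos_INR s). pose proof (sqrt_lt_R0 3 ltac:(lra)).
  rewrite sqrt_div_alt by lra.
  replace (INR s) with (sqrt (INR s) * sqrt (INR s)) at 3 by (apply sqrt_sqrt; lra).
  field. lra.
Qed.

(* With [q = s / n], the terms of order [q^m] and [q^(m + 1/2)] in the expansions of [cosh] and
   [sinh] of [theta s * (sqrt (1 + q) - 1) / sqrt q] are [e1 s m / n^m] and [o1 s m / n^m / sqrt n]. *)
Lemma e1_sqrt_pow (s m : nat) :
  e1 s m = INR s ^ m *
    sum_f_R0 (fun v => theta s ^ (2 * v) / factR (2 * v) * sqrt_pow_coef (2 * v) (m + v)) m.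
Proof.
  destruct m as [|m]; [unfold factR; simpl; field|].
  unfold e1. rewrite sum_range_1, (decomp_sum _ (S m)) by lia. simpl pred.
  change (sqrt_pow_coef (2 * 0) (S m + 0)) with 0.
  rewrite Rmult_0_r, Rplus_0_l, !scal_sum. apply sum_eq. intros i Hi.
  assert (exists d, m = (i + d)%nat) as [d ->] by (exists (m - i)%nat; lia).
  replace (2 * S i)%nat with (S (2 * i + 1)) by lia.
  replace (S (i + d) + S i)%nat with (S (2 * i + 1) + d)%nat by lia.
  rewrite sqrt_pow_coef_S. unfold sqrt_pow_closed.
  replace (2 * S (i + d) - 1)%nat with (2 * i + 1 + 2 * d)%nat by lia.
  replace (S (2 * i + 1) - 1)%nat with (2 * i + 1)%nat by lia.
  replace (S i + S (i + d))%nat with (S (2 * i + 1) + d)%nat by lia.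
  replace (S (i + d) - S i)%nat with d by lia.
  replace (S (2 * i + 1) + 2 * d)%nat with (2 * S (i + d))%nat by lia.
  replace (S (2 * i + 1)) with (2 * S i)%nat by lia.
  replace (factR (2 * S i)) with (INR (2 * S i) * factR (2 * i + 1))
    by (replace (2 * S i)%nat with (S (2 * i + 1)) by lia; symmetry; apply factR_S).
  rewrite (pow_mult 2 2), pow_mult, theta_sq.
  replace (-4 * PI ^ 2 * INR s / 3) with (- (4 * PI ^ 2 * INR s / 3)) by field.
  replace (-4) with (- (4)) by ring. replace (2 ^ 2) with 4 by ring.
  rewrite pow_opp_l. unfold Rdiv. rewrite Rinv_pow_opp by lra.
  rewrite <- (pow_neg_one_add_cancel (S i) d), <- plus_Sn_m.
  pose proof (factR_pos (2 * i + 1)). pose proof (factR_pos (2 * i + 1 + 2 * d)).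
  pose proof (factR_pos (2 * S i + d)). pose proof (factR_pos d).
  pose proof (pow_lt 4 (S i + d) ltac:(lra)). pose proof (lt_0_INR (2 * S i) ltac:(lia)).
  field. repeat split; lra.
Qed.

Lemma o1_sqrt_pow (s m : nat) :
  o1 s m = sqrt (INR s) * INR s ^ m *
    sum_f_R0 (fun v => theta s ^ (2 * v + 1) / factR (2 * v + 1) *
                       sqrt_pow_coef (2 * v + 1) (m + v + 1)) m.
Proof.
  destruct (Nat.eq_dec s 0) as [-> | Hs].
  { unfold o1. simpl INR. rewrite sqrt_0, (pow_i (m + 1)) by lia. unfold Rdiv. ring. }
  assert (Hs0 : 0 < INR s) by (apply lt_0_INR; lia).
  assert (Htheta : theta s = 2 * PI * INR s / (sqrt 3 * sqrt (INR s))).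
  { pose proof (sqrt_lt_R0 _ Hs0). pose proof (sqrt_lt_R0 3 ltac:(lra)).
    apply (Rmult_eq_reg_r (sqrt (INR s))); [|lra].
    rewrite theta_mul_sqrt. field. lra. }
  unfold o1. rewrite sum_range_0, !scal_sum. apply sum_eq. intros i Hi.
  assert (exists d, m = (i + d)%nat) as [d ->] by (exists (m - i)%nat; lia).
  replace (2 * i + 1)%nat with (S (2 * i)) by lia.
  replace (i + d + i + 1)%nat with (S (2 * i) + d)%nat by lia.
  rewrite sqrt_pow_coef_S. unfold sqrt_pow_closed.
  replace (2 * i + 2 * d)%nat with (2 * (i + d))%nat by lia.
  replace (S (2 * i) + 2 * d)%nat with (S (2 * (i + d))) by lia.
  replace (i + d - i)%nat with d by lia.
  replace (i + (i + d) + 1)%nat with (S (2 * i) + d)%nat by lia.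
  replace (-4 * PI ^ 2 * INR s / 3) with (- (4 * PI ^ 2 * INR s / 3)) by field.
  replace (-4) with (- (4)) by ring.
  unfold Rdiv. rewrite (Rinv_mult (sqrt 3)), Rinv_pow_opp, pow_opp_l by lra.
  rewrite <- (tech_pow_Rmult (theta s)), <- (tech_pow_Rmult 2 (2 * (i + d))).
  rewrite (pow_mult 2 2), (pow_mult (theta s) 2), theta_sq, factR_S, Htheta.
  replace (2 ^ 2) with 4 by ring.
  rewrite <- (pow_neg_one_add_cancel i d), (pow_add (INR s) (i + d) 1), pow_1.
  pose proof (factR_pos (2 * i)). pose proof (factR_pos (2 * (i + d))).
  pose proof (factR_pos (S (2 * i) + d)). pose proof (factR_pos d).
  pose proof (pow_lt 4 (i + d) ltac:(lra)). pose proof (lt_0_INR (S (2 * i)) ltac:(lia)).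
  pose proof (sqrt_lt_R0 3 ltac:(lra)). pose proof (sqrt_lt_R0 _ Hs0).
  unfold Rdiv. field. repeat split; lra.
Qed.

(** * Triangular double series and Cauchy products *)

Lemma triangular_double_series (t : nat -> nat -> R) (F A : nat -> R) (Sum SA q : R) :
  0 <= q < 1 ->
  (forall v, is_series (t v) (F v)) -> is_series F Sum ->
  (forall v M, Rabs (t v M) <= A v * q ^ M) -> (forall v, 0 <= A v) -> is_series A SA ->
  (forall v M, (M < v)%nat -> t v M = 0) ->
  (forall T, Rabs (Sum - sum_f_R0 (fun M => sum_f_R0 (fun v => t v M) M) T)
               <= SA * q ^ S T / (1 - q)) /\
  (forall M, Rabs (sum_f_R0 (fun v => t v M) M) <= SA * q ^ M).
Proof.
  intros Hq Ht HF Hb HA0 HA H0. split.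
  - intros T.
    (* the partial sum up to [T] of the diagonal sums is the sum of the rows truncated at [T] *)
    set (P := fun v => sum_f_R0 (t v) T).
    assert (E : sum_f_R0 (fun M => sum_f_R0 (fun v => t v M) M) T = sum_f_R0 P T).
    { rewrite (sum_eq _ (fun M => sum_f_R0 (fun v => t v M) T)).
      - apply sum_f_R0_swap.
      - intros M HM. symmetry. apply sum_f_R0_zero_tail; [intros; apply H0|]; lia. }
    assert (HP : is_series P (sum_f_R0 P T)).
    { apply is_series_finite_support. intros v Hv. unfold P.
      rewrite (sum_eq _ (fun _ => 0)), sum_cte by (intros; apply H0; lia). ring. }
    rewrite E. replace (SA * q ^ S T / (1 - q)) with (SA * (q ^ S T / (1 - q))) by (unfold Rdiv; ring).
    apply (is_series_Rabs_le (fun v => F v - P v) (fun v => A v * (q ^ S T / (1 - q)))).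
    + exact (is_series_minus _ _ _ _ HF HP).
    + exact (is_series_scal_r _ _ _ HA).
    + intros v. unfold P.
      replace (A v * (q ^ S T / (1 - q))) with (A v * q ^ S T / (1 - q)) by (unfold Rdiv; ring).
      now apply is_series_tail_geom_le.
  - intros M. eapply Rle_trans; [apply sum_f_R0_triangle|].
    eapply Rle_trans; [apply (sum_Rle _ (fun v => A v * q ^ M)); intros; apply Hb|].
    rewrite <- scal_sum, Rmult_comm. apply Rmult_le_compat_r; [apply pow_le; lra|].
    now apply sum_f_R0_le_is_series.
Qed.

Lemma cauchy_product_err (G K : R) (a b : nat -> R) (Ea Ka Eb q r : R) (T : nat) :
  (forall t, Rabs (G - sum_f_R0 a t) <= Ea * q ^ S t) ->
  (forall k, Rabs (a k) <= Ka * q ^ k) ->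
  (forall t, Rabs (K - sum_f_R0 b t) <= Eb * r ^ S t) ->
  Rabs K <= 1 ->
  Rabs (G * K - sum_f_R0 (fun L => sum_f_R0 (fun k => a k * b (L - k)%nat) L) T)
    <= Ea * q ^ S T + sum_f_R0 (fun k => Ka * q ^ k * (Eb * r ^ S (T - k))) T.
Proof.
  intros HG Ha HK HK1.
  rewrite (sum_f_R0_triangle_swap (fun k i => a k * b i)).
  assert (E : G * K - sum_f_R0 (fun k => sum_f_R0 (fun i => a k * b i) (T - k)) T =
              (G - sum_f_R0 a T) * K + sum_f_R0 (fun k => a k * (K - sum_f_R0 b (T - k))) T).
  { rewrite (sum_eq (fun k => a k * (K - sum_f_R0 b (T - k)))
                    (fun k => a k * K - sum_f_R0 (fun i => a k * b i) (T - k))).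
    - rewrite minus_sum, <- scal_sum. ring.
    - intros k _. rewrite Rmult_minus_distr_l, scal_sum. f_equal. apply sum_eq. intros; ring. }
  rewrite E. eapply Rle_trans; [apply Rabs_triang | apply Rplus_le_compat].
  - rewrite Rabs_mult, <- (Rmult_1_r (Ea * q ^ S T)).
    apply Rmult_le_compat; auto using Rabs_pos.
  - eapply Rle_trans; [apply sum_f_R0_triangle | apply sum_Rle]. intros k _.
    rewrite Rabs_mult. apply Rmult_le_compat; auto using Rabs_pos.
Qed.

(** * Expansion of the shifted main term *)

Section Expansion.
Variables s n : nat.
Hypothesis Hs : (1 <= s)%nat.
Hypothesis Hn : 0 < INR n.
Hypothesis Hratio : INR s / INR n <= 1 / 4.

Definition ratio : R := INR s / INR n.
Definition shift_exponent : R := theta s * (sqrt (1 + ratio) - 1) / sqrt ratio.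
Definition binom_factor : R := Rpower (1 + ratio) (- 5 / 4).
Definition rho : R := 5 * ratio / 4.

Lemma ratio_pos : 0 < ratio.
Proof. apply Rdiv_lt_0_compat; [apply lt_0_INR; lia | exact Hn]. Qed.

Lemma ratio_pow_mul_inv (M : nat) : ratio ^ M = INR s ^ M * (/ INR n) ^ M.
Proof. unfold ratio, Rdiv. apply Rpow_mult_distr. Qed.

Lemma sqrt_ratio_pow_even (k : nat) : sqrt ratio ^ (2 * k) = ratio ^ k.
Proof. rewrite pow_mult, pow2_sqrt; [reflexivity | left; apply ratio_pos]. Qed.

Lemma shift_exponent_pow (j : nat) :
  shift_exponent ^ j = theta s ^ j * (sqrt (1 + ratio) - 1) ^ j / sqrt ratio ^ j.
Proof. unfold shift_exponent, Rdiv. now rewrite !Rpow_mult_distr, pow_inv. Qed.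

Lemma is_series_shift_exponent_row (p v : nat) :
  is_series (fun M => theta s ^ (2 * v + p) / factR (2 * v + p) * sqrt ratio ^ p *
                      sqrt_pow_coef (2 * v + p) (v + p + M) * ratio ^ M)
            (shift_exponent ^ (2 * v + p) / factR (2 * v + p)).
Proof.
  pose proof ratio_pos as Hq0. pose proof (sqrt_lt_R0 _ Hq0) as Hsq.
  assert (Hq1 : ratio < 1) by (pose proof Hratio; unfold ratio in *; lra).
  set (c := theta s ^ (2 * v + p) / factR (2 * v + p) * sqrt ratio ^ p).
  replace (shift_exponent ^ (2 * v + p) / factR (2 * v + p))
    with (c * ((sqrt (1 + ratio) - 1) ^ (2 * v + p) / ratio ^ (v + p))).
  - refine (is_series_ext _ _ _ _ (is_series_scal_l c _ _
      (is_series_sqrt_pow_shift ratio (2 * v + p) (v + p) ltac:(lra) ltac:(lia)))).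
    intros M.
    change (c * (sqrt_pow_coef (2 * v + p) (v + p + M) * ratio ^ M) =
            c * sqrt_pow_coef (2 * v + p) (v + p + M) * ratio ^ M). ring.
  - rewrite shift_exponent_pow, <- sqrt_ratio_pow_even.
    replace (2 * (v + p))%nat with (2 * v + p + p)%nat by lia.
    rewrite (pow_add (sqrt ratio) (2 * v + p) p). unfold c.
    pose proof (factR_pos (2 * v + p)).
    pose proof (pow_lt _ (2 * v + p) Hsq). pose proof (pow_lt _ p Hsq).
    field. lra.
Qed.

Lemma shift_exponent_expansion (p : nat) (Fw Fth : R) (a : nat -> R) :
  is_series (fun v => shift_exponent ^ (2 * v + p) / factR (2 * v + p)) Fw ->
  is_series (fun v => theta s ^ (2 * v + p) / factR (2 * v + p)) Fth ->
  (forall M, a M = sqrt ratio ^ p * ratio ^ M *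
     sum_f_R0 (fun v => theta s ^ (2 * v + p) / factR (2 * v + p) *
                        sqrt_pow_coef (2 * v + p) (M + v + p)) M) ->
  (forall T, Rabs (Fw - sum_f_R0 a T) <= Fth * sqrt ratio ^ p * ratio ^ S T / (1 - ratio)) /\
  (forall M, Rabs (a M) <= Fth * sqrt ratio ^ p * ratio ^ M).
Proof.
  intros HFw HFth Ha.
  pose proof ratio_pos as Hq0. pose proof (sqrt_lt_R0 _ Hq0) as Hsq. pose proof (theta_nonneg s).
  set (c := fun v => theta s ^ (2 * v + p) / factR (2 * v + p) * sqrt ratio ^ p).
  set (t := fun v M => c v * sqrt_pow_coef (2 * v + p) (v + p + M) * ratio ^ M).
  assert (Hc : forall v, 0 <= c v).
  { intros v. pose proof (factR_pos (2 * v + p)). pose proof (pow_lt _ p Hsq).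
    apply Rmult_le_pos; [apply Rdiv_le_0_compat; [apply pow_le|]|]; lra. }
  assert (Hcol : forall M, sum_f_R0 (fun v => t v M) M = a M).
  { intros M. rewrite Ha, scal_sum. apply sum_eq. intros v _.
    unfold t, c. replace (v + p + M)%nat with (M + v + p)%nat by lia. ring. }
  destruct (triangular_double_series t (fun v => shift_exponent ^ (2 * v + p) / factR (2 * v + p))
              c Fw (Fth * sqrt ratio ^ p) ratio) as [Happrox Hcoef].
  - pose proof Hratio. unfold ratio in *. lra.
  - apply is_series_shift_exponent_row.
  - exact HFw.
  - intros v M. unfold t. pose proof (pow_le ratio M ltac:(lra)).
    rewrite !Rabs_mult, (Rabs_pos_eq (c v) (Hc v)), (Rabs_pos_eq (ratio ^ M)) by lra.
    apply Rmult_le_compat_r; [lra|]. rewrite <- (Rmult_1_r (c v)) at 2.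
    apply Rmult_le_compat_l; [apply Hc | apply sqrt_pow_coef_abs_le].
  - exact Hc.
  - exact (is_series_scal_r _ _ _ HFth).
  - intros v M HM. unfold t. rewrite sqrt_pow_coef_lt by lia. ring.
  - split.
    + intros T. rewrite <- (sum_eq (fun M => sum_f_R0 (fun v => t v M) M)) by (intros; apply Hcol).
      apply Happrox.
    + intros M. rewrite <- Hcol. apply Hcoef.
Qed.

Lemma cosh_shift_expansion :
  (forall T, Rabs (cosh shift_exponent - sum_f_R0 (fun M => e1 s M * (/ INR n) ^ M) T)
               <= cosh (theta s) * ratio ^ S T / (1 - ratio)) /\
  (forall M, Rabs (e1 s M * (/ INR n) ^ M) <= cosh (theta s) * ratio ^ M).
Proof.
  assert (Hcosh : forall x, is_series (fun v => x ^ (2 * v + 0) / factR (2 * v + 0)) (cosh x)).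
  { intros x. refine (is_series_ext _ _ _ _ (is_series_cosh x)). intros v. now rewrite Nat.add_0_r. }
  destruct (shift_exponent_expansion 0 _ _ (fun M => e1 s M * (/ INR n) ^ M)
              (Hcosh shift_exponent) (Hcosh (theta s))) as [Happrox Hcoef].
  - intros M. rewrite e1_sqrt_pow, ratio_pow_mul_inv, pow_O.
    rewrite (sum_eq (fun v => theta s ^ (2 * v + 0) / factR (2 * v + 0) *
                              sqrt_pow_coef (2 * v + 0) (M + v + 0))
                    (fun v => theta s ^ (2 * v) / factR (2 * v) * sqrt_pow_coef (2 * v) (M + v)))
      by (intros; now rewrite !Nat.add_0_r).
    ring.
  - rewrite pow_O, Rmult_1_r in Happrox, Hcoef. now split.
Qed.

Lemma sinh_shift_expansion :
  (forall T, Rabs (sinh shift_exponent -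
                   sum_f_R0 (fun M => o1 s M * (/ INR n) ^ M / sqrt (INR n)) T)
               <= sinh (theta s) * sqrt ratio * ratio ^ S T / (1 - ratio)) /\
  (forall M, Rabs (o1 s M * (/ INR n) ^ M / sqrt (INR n)) <= sinh (theta s) * sqrt ratio * ratio ^ M).
Proof.
  destruct (shift_exponent_expansion 1 _ _ (fun M => o1 s M * (/ INR n) ^ M / sqrt (INR n))
              (is_series_sinh shift_exponent) (is_series_sinh (theta s))) as [Happrox Hcoef].
  - intros M. rewrite o1_sqrt_pow, ratio_pow_mul_inv, pow_1.
    unfold ratio. rewrite sqrt_div_alt by exact Hn.
    pose proof (sqrt_lt_R0 _ Hn). field. lra.
  - rewrite pow_1 in Happrox, Hcoef. now split.
Qed.

Lemma binom_factor_abs_le : Rabs binom_factor <= 1.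
Proof.
  pose proof ratio_pos. unfold binom_factor.
  replace (- 5 / 4) with (- (5 / 4)) by field. rewrite Rpower_Ropp.
  assert (H1 : 1 <= Rpower (1 + ratio) (5 / 4)).
  { rewrite <- (Rpower_O (1 + ratio)) at 1 by lra. apply Rle_Rpower; lra. }
  rewrite Rabs_pos_eq by (left; apply Rinv_0_lt_compat; lra).
  apply (Rmult_le_reg_r (Rpower (1 + ratio) (5 / 4))); [lra|]. rewrite Rinv_l; lra.
Qed.

Lemma binom_factor_approx (T : nat) :
  Rabs (binom_factor - sum_f_R0 (fun i => e2 s i * (/ INR n) ^ i) T) <= rho ^ S T / (1 - rho).
Proof.
  pose proof ratio_pos as Hq0. assert (Hq1 : ratio <= 1 / 4) by exact Hratio.
  rewrite (sum_eq _ (fun i => gbinom (- 5 / 4) i * ratio ^ i))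
    by (intros; unfold e2; rewrite ratio_pow_mul_inv; ring).
  rewrite <- (Rmult_1_l (rho ^ S T)).
  apply is_series_tail_geom_le.
  - apply (is_series_gbinom (- 5 / 4) (5 / 4)); [lra | rewrite Rabs_left; lra |].
    rewrite Rabs_right; lra.
  - unfold rho. lra.
  - intros k. pose proof (pow_le ratio k ltac:(lra)).
    rewrite Rmult_1_l, Rabs_mult, (Rabs_pos_eq (ratio ^ k)) by lra.
    unfold rho. replace (5 * ratio / 4) with (5 / 4 * ratio) by field. rewrite Rpow_mult_distr.
    apply Rmult_le_compat_r; [lra|].
    apply gbinom_bound; [lra | rewrite Rabs_left; lra].
Qed.

Lemma rho_bounds : 0 < rho <= 5 / 16.
Proof. pose proof ratio_pos. pose proof Hratio. unfold rho, ratio in *. lra. Qed.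

Lemma product_err_le (C : R) (T : nat) : 0 <= C ->
  C / (1 - ratio) * ratio ^ S T + sum_f_R0 (fun k => C * ratio ^ k * (/ (1 - rho) * rho ^ S (T - k))) T
    <= 9 * C * rho ^ S T.
Proof.
  intros HC. pose proof ratio_pos. assert (Hq1 : ratio <= 1 / 4) by exact Hratio.
  pose proof rho_bounds as Hrho. pose proof (pow_le rho (S T) ltac:(lra)) as Hpow.
  assert (Hqr : ratio = 4 / 5 * rho) by (unfold rho; field).
  assert (Hsum : sum_f_R0 (fun k => C * ratio ^ k * (/ (1 - rho) * rho ^ S (T - k))) T =
                 C / (1 - rho) * rho ^ S T * sum_f_R0 (fun k => (4 / 5) ^ k) T).
  { rewrite scal_sum. apply sum_eq. intros k Hk. rewrite Hqr, Rpow_mult_distr.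
    rewrite (pow_add_sub rho k (S T)), Nat.sub_succ_l by lia.
    field. lra. }
  assert (Hgeom : sum_f_R0 (fun k => (4 / 5) ^ k) T <= 5).
  { apply Rle_trans with (/ (1 - 4 / 5)); [|right; field].
    apply sum_f_R0_le_is_series; [apply is_series_geom; rewrite Rabs_right; lra |].
    intros; apply pow_le; lra. }
  assert (Hfirst : C / (1 - ratio) * ratio ^ S T <= 4 / 3 * C * rho ^ S T).
  { apply Rmult_le_compat; [apply Rdiv_le_0_compat; lra | apply pow_le; lra | |].
    - apply (Rmult_le_reg_r (1 - ratio)); [lra|]. unfold Rdiv. rewrite Rmult_assoc, Rinv_l by lra. nra.
    - apply pow_incr. lra. }
  assert (Hsecond : C / (1 - rho) * rho ^ S T * sum_f_R0 (fun k => (4 / 5) ^ k) T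
                    <= 80 / 11 * C * rho ^ S T).
  { pose proof (cond_pos_sum (fun k => (4 / 5) ^ k) T (fun k => pow_le (4 / 5) k ltac:(lra))).
    assert (C / (1 - rho) <= 16 / 11 * C).
    { apply (Rmult_le_reg_r (1 - rho)); [lra|]. unfold Rdiv. rewrite Rmult_assoc, Rinv_l by lra. nra. }
    apply Rle_trans with (16 / 11 * C * rho ^ S T * 5); [|lra].
    apply Rmult_le_compat; try lra.
    - apply Rmult_le_pos; [apply Rdiv_le_0_compat|]; lra.
    - apply Rmult_le_compat_r; lra. }
  rewrite Hsum. nra.
Qed.

Lemma binom_factor_product_err (G C : R) (a : nat -> R) (T : nat) : 0 <= C ->
  (forall t, Rabs (G - sum_f_R0 a t) <= C * ratio ^ S t / (1 - ratio)) ->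
  (forall k, Rabs (a k) <= C * ratio ^ k) ->
  Rabs (G * binom_factor -
        sum_f_R0 (fun L => sum_f_R0 (fun k => a k * (e2 s (L - k) * (/ INR n) ^ (L - k))) L) T)
    <= 9 * C * rho ^ S T.
Proof.
  intros HC HG Ha. eapply Rle_trans; [|apply (product_err_le C T HC)].
  apply (cauchy_product_err G binom_factor a (fun i => e2 s i * (/ INR n) ^ i)).
  - intros t.
    replace (C / (1 - ratio) * ratio ^ S t) with (C * ratio ^ S t / (1 - ratio)) by (unfold Rdiv; ring).
    apply HG.
  - exact Ha.
  - intros t. replace (/ (1 - rho) * rho ^ S t) with (rho ^ S t / (1 - rho)) by (unfold Rdiv; ring).
    apply binom_factor_approx.
  - apply binom_factor_abs_le.
Qed.

Lemma e3_partial_err (T : nat) :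
  Rabs (cosh shift_exponent * binom_factor - sum_f_R0 (fun L => e3 s L * (/ INR n) ^ L) T)
    <= 9 * cosh (theta s) * rho ^ S T.
Proof.
  destruct cosh_shift_expansion as [Happrox Hcoef].
  rewrite (sum_eq _ (fun L => sum_f_R0 (fun k => e1 s k * (/ INR n) ^ k *
                                                (e2 s (L - k) * (/ INR n) ^ (L - k))) L)).
  - apply binom_factor_product_err; [left; apply cosh_pos | exact Happrox | exact Hcoef].
  - intros L _. unfold e3. rewrite sum_range_0, Rmult_comm, scal_sum.
    apply sum_eq. intros k Hk.
    rewrite (pow_add_sub (/ INR n) k L) by lia.
    ring.
Qed.

Lemma o3_partial_err (T : nat) :
  Rabs (sinh shift_exponent * binom_factor -
        sum_f_R0 (fun L => o3 s L * (/ INR n) ^ L / sqrt (INR n)) T)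
    <= 9 * (sinh (theta s) * sqrt ratio) * rho ^ S T.
Proof.
  destruct sinh_shift_expansion as [Happrox Hcoef].
  rewrite (sum_eq _ (fun L => sum_f_R0 (fun k => o1 s k * (/ INR n) ^ k / sqrt (INR n) *
                                                (e2 s (L - k) * (/ INR n) ^ (L - k))) L)).
  - apply binom_factor_product_err.
    + apply Rmult_le_pos; [apply sinh_nonneg, theta_nonneg | apply sqrt_pos].
    + exact Happrox.
    + exact Hcoef.
  - intros L _. unfold o3. rewrite sum_range_0. unfold Rdiv. rewrite Rmult_assoc, Rmult_comm, scal_sum.
    apply sum_eq. intros k Hk.
    rewrite (pow_add_sub (/ INR n) k L) by lia.
    ring.
Qed.

Lemma shift_factor_err (M1 M2 N : nat) :
  (N + 2 <= 2 * S M1)%nat -> (N + 2 <= 2 * S M2 + 1)%nat ->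
  Rabs (exp shift_exponent * binom_factor -
        (sum_f_R0 (fun L => e3 s L * (/ INR n) ^ L) M1 +
         sum_f_R0 (fun L => o3 s L * (/ INR n) ^ L / sqrt (INR n)) M2))
    <= 18 * cosh (theta s) * sqrt rho ^ (N + 2).
Proof.
  intros H1 H2.
  pose proof (e3_partial_err M1) as He. pose proof (o3_partial_err M2) as Ho.
  pose proof rho_bounds as Hrho. pose proof ratio_pos as Hq.
  pose proof (sinh_nonneg _ (theta_nonneg s)). pose proof (sinh_le_cosh (theta s)).
  pose proof (cosh_pos (theta s)).
  assert (Hb : 0 <= sqrt rho <= 1).
  { split; [apply sqrt_pos|]. rewrite <- sqrt_1. apply sqrt_le_1_alt. lra. }
  assert (Hsq : sqrt ratio <= sqrt rho) by (apply sqrt_le_1_alt; unfold rho; lra).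
  assert (Hrho_sq : forall k, rho ^ k = sqrt rho ^ (2 * k))
    by (intros; rewrite pow_mult, pow2_sqrt; lra).
  assert (R1 : rho ^ S M1 <= sqrt rho ^ (N + 2)).
  { rewrite Hrho_sq. now apply pow_le_pow_le_1. }
  assert (R2 : sqrt ratio * rho ^ S M2 <= sqrt rho ^ (N + 2)).
  { rewrite Hrho_sq. apply Rle_trans with (sqrt rho ^ (2 * S M2 + 1)).
    - rewrite pow_add, pow_1, Rmult_comm. apply Rmult_le_compat_l; [apply pow_le|]; lra.
    - now apply pow_le_pow_le_1. }
  pose proof (pow_le rho (S M2) ltac:(lra)). pose proof (sqrt_pos ratio).
  rewrite <- cosh_plus_sinh.
  match goal with |- Rabs (?x - (?y + ?z)) <= _ =>
    replace (x - (y + z)) with ((cosh shift_exponent * binom_factor - y) +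
                                (sinh shift_exponent * binom_factor - z)) by ring end.
  eapply Rle_trans; [apply Rabs_triang|].
  assert (0 <= sinh (theta s) * (sqrt ratio * rho ^ S M2) <= cosh (theta s) * sqrt rho ^ (N + 2)).
  { split; [apply Rmult_le_pos; [|apply Rmult_le_pos]; lra|]. apply Rmult_le_compat; try lra.
    apply Rmult_le_pos; lra. }
  assert (cosh (theta s) * rho ^ S M1 <= cosh (theta s) * sqrt rho ^ (N + 2))
    by (apply Rmult_le_compat_l; lra).
  lra.
Qed.

Lemma C2_scaled (N : nat) :
  C2 N s * Rpower (INR n) (- ((INR N + 2) / 2)) = 16 / 11 * sqrt rho ^ (N + 2).
Proof.
  pose proof rho_bounds as Hrho. assert (Hs0 : 0 < INR s) by (apply lt_0_INR; lia).
  rewrite <- (Rpower_pow (N + 2) (sqrt rho)) by (apply sqrt_lt_R0; lra).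
  rewrite <- Rpower_sqrt, Rpower_mult by lra.
  unfold rho, ratio.
  replace (5 * (INR s / INR n) / 4) with ((5 * INR s / 4) * / INR n) by (field; lra).
  rewrite <- Rpower_mult_distr, Rpower_Rinv by (try apply Rinv_0_lt_compat; lra).
  rewrite plus_INR. replace (/ 2 * (INR N + INR 2)) with (INR N / 2 + 1) by (simpl; field).
  replace (- (INR N / 2 + 1)) with (- ((INR N + 2) / 2)) by field.
  rewrite Rpower_plus, Rpower_1 by lra. unfold C2. field.
Qed.

End Expansion.

Lemma four_mul_le_n1 (s : nat) : (4 * s <= n1 s)%nat.
Proof.
  unfold n1. destruct (Nat.leb_spec s 1) as [Hs | Hs]; [lia|].
  replace (s ^ 4)%nat with (s * s * (s * s))%nat by (simpl; lia).
  assert (4 <= s * s)%nat by nia. nia.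
Qed.

Lemma ratio_le_of_n1_le (s n : nat) : (1 <= s)%nat -> (n1 s <= n)%nat -> INR s / INR n <= 1 / 4.
Proof.
  intros Hs hn. pose proof (four_mul_le_n1 s) as H4.
  assert (Hn4 : INR (4 * s) <= INR n) by (apply le_INR; lia).
  rewrite mult_INR in Hn4. simpl in Hn4.
  apply Rle_div_l; [apply lt_0_INR; lia | lra].
Qed.

Lemma mainterm_shift (s n : nat) : (1 <= s)%nat -> 0 < INR n ->
  mainterm (INR n + INR s) = mainterm (INR n) * (exp (shift_exponent s n) * binom_factor s n).
Proof.
  intros Hs Hn. assert (Hs0 : 0 < INR s) by (apply lt_0_INR; lia).
  assert (Hq : 0 < ratio s n) by (apply Rdiv_lt_0_compat; lra).
  assert (Hsplit : INR n + INR s = INR n * (1 + ratio s n)) by (unfold ratio; field; lra).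
  assert (Hexp : 2 * PI * sqrt ((INR n + INR s) / 3) = 2 * PI * sqrt (INR n / 3) + shift_exponent s n).
  { unfold shift_exponent, theta, ratio.
    replace (1 + INR s / INR n) with ((INR n + INR s) / INR n) by (field; lra).
    rewrite !sqrt_div_alt by lra.
    pose proof (sqrt_lt_R0 3 ltac:(lra)). pose proof (sqrt_lt_R0 _ Hs0). pose proof (sqrt_lt_R0 _ Hn).
    field. lra. }
  unfold mainterm, binom_factor. rewrite Hexp, exp_plus, Hsplit at 1.
  rewrite <- Rpower_mult_distr by lra.
  replace (- 5 / 4) with (- (5 / 4)) by field. rewrite Rpower_Ropp.
  pose proof (exp_pos (5 / 4 * ln (INR n))). pose proof (exp_pos (5 / 4 * ln (1 + ratio s n))).
  pose proof (exp_pos (3 / 4 * ln 3)). pose proof (sqrt_lt_R0 _ PI_RGT_0).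
  unfold Rpower. field. repeat split; lra.
Qed.

Lemma C3_ge (N s : nat) : (1 <= s)%nat -> 20.5 * C2 N s * kappa s <= C3 N s.
Proof.
  intros Hs. assert (Hs0 : 0 < INR s) by (apply lt_0_INR; lia).
  assert (Hk : 0 < kappa s) by apply cosh_pos.
  assert (0 < C2 N s).
  { unfold C2. apply Rmult_lt_0_compat; [apply Rdiv_lt_0_compat; lra | apply exp_pos]. }
  assert (0 < Defs.C1 N s).
  { unfold Defs.C1.
    apply Rmult_lt_0_compat; [apply Rmult_lt_0_compat; [lra | apply exp_pos] | exact Hk]. }
  pose proof (sqrt_pos (INR s)).
  assert (0 <= sqrt (INR s) * C2 N s) by (apply Rmult_le_pos; lra).
  assert (0 <= INR s * C2 N s * kappa s) by (apply Rmult_le_pos; [apply Rmult_le_pos|]; lra).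
  unfold C3. nra.
Qed.

Lemma C3_dominates (N s n : nat) : (1 <= s)%nat -> 0 < INR n -> INR s / INR n <= 1 / 4 ->
  18 * cosh (theta s) * sqrt (rho s n) ^ (N + 2) <= C3 N s * Rpower (INR n) (- ((INR N + 2) / 2)).
Proof.
  intros Hs Hn Hratio.
  pose proof (C2_scaled s n Hs Hn Hratio N) as HC2.
  set (P := Rpower (INR n) (- ((INR N + 2) / 2))) in *.
  assert (HP : 0 < P) by apply exp_pos.
  pose proof (pow_le _ (N + 2) (sqrt_pos (rho s n))). pose proof (cosh_pos (theta s)).
  apply Rle_trans with (20.5 * kappa s * (C2 N s * P)).
  - rewrite HC2. change (kappa s) with (cosh (theta s)). nra.
  - replace (20.5 * kappa s * (C2 N s * P)) with (20.5 * C2 N s * kappa s * P) by ring.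
    apply Rmult_le_compat_r; [lra | now apply C3_ge].
Qed.

Lemma dd2_even_term (s L : nat) (x : R) : 0 < x ->
  dd2 s (2 * L) / Rpower x (INR (2 * L) / 2) = e3 s L * (/ x) ^ L.
Proof.
  intros Hx.
  replace (dd2 s (2 * L)) with (e3 s L)
    by (unfold dd2; now rewrite Nat.even_mul, Nat.div2_double).
  rewrite mult_INR. replace (INR 2 * INR L / 2) with (INR L) by (simpl; field).
  rewrite Rpower_pow, pow_inv by exact Hx. reflexivity.
Qed.

Lemma dd2_odd_term (s L : nat) (x : R) : 0 < x ->
  dd2 s (2 * L + 1) / Rpower x (INR (2 * L + 1) / 2) = o3 s L * (/ x) ^ L / sqrt x.
Proof.
  intros Hx. replace (2 * L + 1)%nat with (S (2 * L)) by lia.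
  replace (dd2 s (S (2 * L))) with (o3 s L)
    by (unfold dd2; now rewrite Nat.even_succ, Nat.odd_mul, Nat.div2_succ_double).
  rewrite S_INR, mult_INR. replace ((INR 2 * INR L + 1) / 2) with (INR L + / 2) by (simpl; field).
  rewrite Rpower_plus, Rpower_pow, Rpower_sqrt, pow_inv by exact Hx.
  pose proof (pow_lt x L Hx). pose proof (sqrt_lt_R0 x Hx). field. lra.
Qed.

Lemma dd2_partial_sum (N s : nat) (x : R) : 0 < x -> exists M1 M2,
  (N + 2 <= 2 * S M1)%nat /\ (N + 2 <= 2 * S M2 + 1)%nat /\
  sum_range 0 (N + 1) (fun m => dd2 s m / Rpower x (INR m / 2)) =
  sum_f_R0 (fun L => e3 s L * (/ x) ^ L) M1 + sum_f_R0 (fun L => o3 s L * (/ x) ^ L / sqrt x) M2.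
Proof.
  intros Hx. rewrite sum_range_0.
  assert (Hpairs : forall K, sum_f_R0 (fun m => dd2 s m / Rpower x (INR m / 2)) (2 * K + 1) =
            sum_f_R0 (fun L => e3 s L * (/ x) ^ L) K +
            sum_f_R0 (fun L => o3 s L * (/ x) ^ L / sqrt x) K).
  { intros K. rewrite sum_f_R0_pairs, <- sum_plus. apply sum_eq. intros L _.
    now rewrite dd2_even_term, dd2_odd_term. }
  destruct (Nat.Even_or_Odd N) as [[K ->] | [K ->]].
  - exists K, K. repeat split; try lia. apply Hpairs.
  - exists (S K), K. repeat split; try lia.
    replace (2 * K + 1 + 1)%nat with (S (2 * K + 1)) by lia.
    rewrite tech5, Hpairs, tech5. replace (S (2 * K + 1)) with (2 * S K)%nat by lia.
    rewrite dd2_even_term by exact Hx. ring.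
Qed.

Theorem lemma5p3 (N s n : nat) (hN : (3 <= N)%nat) (hs : (1 <= s)%nat)
  (hn : (n1 s <= n)%nat) :
  exists E : R,
    Rabs E <= C3 N s * Rpower (INR n) (- ((INR N + 2) / 2)) /\
    mainterm (INR n + INR s) =
    mainterm (INR n) *
      (sum_range 0 (N + 1) (fun m => dd2 s m / Rpower (INR n) (INR m / 2)) + E).
Proof.
  assert (Hn : 0 < INR n) by (pose proof (four_mul_le_n1 s); apply lt_0_INR; lia).
  pose proof (ratio_le_of_n1_le s n hs hn) as Hratio.
  destruct (dd2_partial_sum N s (INR n) Hn) as (M1 & M2 & H1 & H2 & ->).
  eexists. split.
  - eapply Rle_trans; [exact (shift_factor_err s n hs Hn Hratio M1 M2 N H1 H2)|].
    now apply C3_dominates.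
  - rewrite mainterm_shift by assumption. ring.
Qed.
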